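(* Let $(G,u,v,\alpha,\beta)$ be a Guvab with $\beta=1$. Then either $\{W_{2k}\}$ is eventually constant, or there exist constants $c_e,\lambda_e$ such that $\left|W_{2k}-\lim_{k\to\infty}W_{2k}\right|\sim c_e\cdot\lambda_e^{2k}$. Also, either $\{W_{2k+1}\}$ is eventually constant, or there exist constants $c_o,\lambda_o$ such that $\left|W_{2k+1}-\lim_{k\to\infty}W_{2k+1}\right|\sim c_o\cdot\lambda_o^{2k+1}$.
   Context: A Guvab is a tuple $(G,u,v,\alpha,\beta)$ where $G$ is a finite, connected, simple graph, $u,v\in V(G)$, and $\alpha,\beta\in[0,1]$ with $\alpha\le\beta$. A random walk on $G$ with starting vertex $w$ and laziness $\gamma$ is the Markov chain $R_0=w$ and, for $i\ge1$, $R_i=R_{i-1}$ with probability $\gamma$ and $R_i=t$ with probability $\frac{1-\gamma}{\deg(R_{i-1})}$ for each neighbor $t$ of $R_{i-1}$. $\mu_k$ is the distribution after $k$ steps of the walk from $u$ with laziness $\alpha$, $\nu_k$ that of the walk from $v$ with laziness $\beta$, and $W_k=W(\mu_k,\nu_k)$ is the Wasserstein ($L^1$ optimal transport) distance with respect to the graph distance. A sequence $\{S_i\}$ is eventually constant if there is $N$ with $S_k=S_N$ for all $k\ge N$; $a_k\sim b_k$ means $a_k/b_k\to1$. The limits $\lim_k W_{2k}$ and $\lim_k W_{2k+1}$ exist. *)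

From HB Require Import structures.
From mathcomp Require Import all_boot all_order all_algebra.
From mathcomp Require Import all_classical all_reals all_analysis.
Set Implicit Arguments. Unset Strict Implicit. Unset Printing Implicit Defensive.
Import Order.TTheory GRing.Theory Num.Theory.
Local Open Scope ring_scope.
Local Open Scope classical_set_scope.

Definition simple_graph (T : finType) (e : rel T) : Prop :=
  (forall x y, e x y = e y x) /\ (forall x, ~~ e x x).

Definition connected_graph (T : finType) (e : rel T) : Prop :=
  forall x y, connect e x y.

Definition walk_n (T : finType) (e : rel T) (n : nat) (x y : T) : bool :=
  [exists p : n.-tuple T, path e x p && (last x p == y)].

(* graph distance: least n with a walk of length n from x to y
   (searched among 0..#|T|-1, which suffices in a connected graph) *)
Definition gdist (T : finType) (e : rel T) (x y : T) : nat :=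
  find (fun n => walk_n e n x y) (iota 0 #|T|).

Definition deg (T : finType) (e : rel T) (x : T) : nat := #|[set y | e x y]|.

Definition trans (R : realType) (T : finType) (e : rel T) (g : R) (x y : T) : R :=
  if x == y then g else if e x y then (1 - g) / (deg e x)%:R else 0.

Fixpoint walk_dist (R : realType) (T : finType) (e : rel T) (g : R) (w : T)
    (k : nat) : T -> R :=
  match k with
  | 0 => fun y => if y == w then 1 else 0
  | k'.+1 => fun y => \sum_(x : T) walk_dist e g w k' x * trans e g x y
  end.

Definition coupling (R : realType) (T : finType) (mu nu : T -> R)
    (pi : T -> T -> R) : Prop :=
  (forall x y, 0 <= pi x y) /\
  (forall x, \sum_(y : T) pi x y = mu x) /\
  (forall y, \sum_(x : T) pi x y = nu y).

Definition wasserstein (R : realType) (T : finType) (e : rel T)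
    (mu nu : T -> R) : R :=
  inf [set c : R | exists pi, coupling mu nu pi /\
        c = \sum_(x : T) \sum_(y : T) pi x y * (gdist e x y)%:R].

Definition Wk (R : realType) (T : finType) (e : rel T) (u v : T) (a b : R)
    (k : nat) : R :=
  wasserstein e (walk_dist e a u k) (walk_dist e b v k).

From mathcomp Require Import all_boot all_order all_algebra.
From mathcomp Require Import all_classical all_reals all_analysis.
From mathcomp Require Import ring complex.
Import Order.TTheory GRing.Theory Num.Theory numFieldNormedType.Exports.
Local Open Scope ring_scope.
Local Open Scope classical_set_scope.

(* With beta = 1 the second walk never leaves v, so the only coupling of mu_k
   with the Dirac mass at v is the product one and W_k = sum_x mu_k(x) d(x, v).
   The lazy walk is reversible with respect to the degrees, hence conjugate to
   a symmetric matrix, and the spectral theorem writes W_k = sum_l a_l lam_l^k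
   with real lam_l.  Along a parity class W_(2k+p) = sum_l (a_l lam_l^p)
   (lam_l^2)^k is an exponential sum with nonnegative ratios; being bounded,
   it either is eventually constant or converges to the coefficient of the
   ratio 1 with an error asymptotic to c m^k, m the largest ratio in (0, 1)
   carrying a nonzero coefficient. *)

Set Implicit Arguments. Unset Strict Implicit. Unset Printing Implicit Defensive.

Lemma seq_max_exists d (X : orderType d) (s : seq X) : s != [::] ->
  exists2 m, m \in s & {in s, forall x, (x <= m)%O}.
Proof.
elim: s => [//|a s IH] _; have [->|/IH [m ms maxm]] := eqVneq s [::].
  by exists a; rewrite ?mem_seq1 // => x; rewrite mem_seq1 => /eqP->.
have [am|ma] := leP a m.
  by exists m; rewrite ?inE ?ms ?orbT // => x; rewrite inE => /predU1P[->|/maxm].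
exists a; rewrite ?mem_head // => x; rewrite inE => /predU1P[->//|/maxm xm].
exact: le_trans xm (ltW ma).
Qed.

Section ExponentialSums.
Variable R : realType.

Definition expsum (c : R -> R) (r : seq R) (k : nat) : R :=
  \sum_(m <- r) c m * m ^+ k.

Definition eventually_constant (u : nat -> R) : Prop :=
  exists N : nat, forall k, (N <= k)%N -> u k = u N.

Definition dist_limn_equiv (u g : nat -> R) : Prop :=
  (fun k => `|u k - limn u| / g k) @ \oo --> (1 : R).

Lemma expsum_group (I : eqType) (s : seq I) (a f : I -> R) k :
  \sum_(i <- s) a i * f i ^+ k =
  expsum (fun m => \sum_(i <- s | f i == m) a i) (undup (map f s)) k.
Proof.
symmetry; rewrite /expsum.
under eq_bigr => m _ do rewrite mulr_suml big_mkcond /=.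
rewrite exchange_big /=; apply: eq_big_seq => i si.
rewrite (bigD1_seq (f i)) ?undup_uniq ?mem_undup ?map_f //= eqxx big1 ?addr0 //.
by move=> m; rewrite eq_sym => /negbTE ->.
Qed.

Lemma expsum_div_max_cvg (c : R -> R) (r : seq R) (m : R) :
  uniq r -> m \in r -> 0 < m -> {in r, forall p, 0 <= p <= m} ->
  (fun k => expsum c r k / m ^+ k) @ \oo --> c m.
Proof.
move=> ur rm m_gt0 r_bnd.
have mk_neq0 k : m ^+ k != 0 by rewrite expf_neq0 ?gt_eqF.
have -> : (fun k => expsum c r k / m ^+ k) =
    (fun k => c m + \sum_(p <- r | p != m) c p * (p / m) ^+ k).
  apply/funext => k; rewrite /expsum (bigD1_seq m) //= mulrDl mulfK //.
  by rewrite mulr_suml; congr (_ + _); apply: eq_bigr => p _; rewrite expr_div_n mulrA.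
rewrite -[X in _ --> X]addr0; apply: cvgD; first exact: cvg_cst.
under eq_fun do rewrite big_seq_cond.
have := @cvg_big _ _ +%R 0 (fun p => (p \in r) && (p != m)) add_continuous _ \oo r
  (fun p k => c p * (p / m) ^+ k) (fun=> 0) _.
rewrite big1_eq; apply => // p /andP[pr pm].
rewrite -(mulr0 (c p)); apply: cvgM; [exact: cvg_cst | apply: cvg_expr].
have /andP[p_ge0 pm'] := r_bnd p pr.
rewrite ger0_norm ?divr_ge0 ?(ltW m_gt0) //.
by rewrite ltr_pdivrMr // mul1r lt_neqAle pm.
Qed.

Lemma bounded_div_expr_cvg0 (u : nat -> R) (m B : R) :
  1 < m -> (forall k, `|u k| <= B) -> (fun k => u k / m ^+ k) @ \oo --> 0.
Proof.
move=> m_gt1 u_bnd; have m_gt0 : 0 < m := lt_trans ltr01 m_gt1.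
have geo0 : (fun k => B * m^-1 ^+ k) @ \oo --> 0.
  rewrite -(mulr0 B); apply: cvgM; first exact: cvg_cst.
  by apply: cvg_expr; rewrite ger0_norm ?invr_ge0 ?ltW // invf_lt1.
have ngeo0 : (fun k => - (B * m^-1 ^+ k)) @ \oo --> 0.
  by rewrite -oppr0; apply: cvgN.
apply: (squeeze_cvgr _ ngeo0 geo0); near=> k.
rewrite -ler_norml -exprVn normrM (ger0_norm (exprn_ge0 _ _)) ?invr_ge0 ?(ltW m_gt0) //.
by rewrite ler_wpM2r ?exprn_ge0 ?invr_ge0 ?(ltW m_gt0).
Unshelve. all: end_near.
Qed.

Lemma dist_limn_equiv_geometric (u : nat -> R) (l L m : R) :
  0 < m < 1 -> L != 0 -> (fun k => (u k - l) / m ^+ k) @ \oo --> L ->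
  dist_limn_equiv u (fun k => `|L| * m ^+ k).
Proof.
move=> /andP[m_gt0 m_lt1] L_neq0 uL.
have mk_neq0 k : m ^+ k != 0 by rewrite expf_neq0 ?gt_eqF.
have ul : u @ \oo --> l.
  have -> : u = (fun k => l + m ^+ k * ((u k - l) / m ^+ k)).
    by apply/funext => k; rewrite mulrC mulfVK // addrC subrK.
  rewrite -[X in _ --> X]addr0 -(mul0r L); apply: cvgD; first exact: cvg_cst.
  by apply: cvgM => //; apply: cvg_expr; rewrite ger0_norm ?ltW.
rewrite /dist_limn_equiv (cvg_lim _ ul) //.
have -> : (fun k => `|u k - l| / (`|L| * m ^+ k)) =
    (fun k => `|(u k - l) / m ^+ k| / `|L|).
  apply/funext => k; rewrite normrM normfV (ger0_norm (exprn_ge0 _ (ltW m_gt0))).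
  by rewrite invfM mulrA mulrAC.
rewrite -(divff (_ : `|L| != 0)) ?normr_eq0 //.
by apply: cvgM; [exact: cvg_norm | exact: cvg_cst].
Qed.

Lemma bounded_expsum_asymptotics (c : R -> R) (r : seq R) (B : R) :
  uniq r -> {in r, forall m, 0 <= m} -> (forall k, `|expsum c r k| <= B) ->
  eventually_constant (expsum c r) \/
  exists C m, 0 < m /\ dist_limn_equiv (expsum c r) (fun k => C * m ^+ k).
Proof.
move=> ur r_ge0 t_bnd.
(* Ratio 1 gives the limit c1, ratio 0 only matters at k = 0, and the largest
   remaining ratio m dominates; boundedness excludes m > 1. *)
set c1 := \sum_(m <- r | m == 1) c m.
set Q := [seq m <- r | [&& c m != 0, m != 0 & m != 1]].
have tQ k : (0 < k)%N -> expsum c r k = c1 + expsum c Q k.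
  move=> k_gt0; rewrite /expsum (bigID (fun m => m == 1)) /=; congr (_ + _).
    by apply: eq_big => // m /eqP ->; rewrite expr1n mulr1.
  rewrite /Q big_filter big_mkcond [RHS]big_mkcond; apply: eq_bigr => m _ /=.
  have [->|cm_neq0] := eqVneq (c m) 0; first by rewrite mul0r !if_same.
  have [->|//] := eqVneq m 0.
  by rewrite expr0n eqn0Ngt k_gt0 mulr0 !if_same.
have [Q0|QN0] := eqVneq Q [::].
  by left; exists 1%N => k k_gt0; rewrite !tQ // Q0 /expsum !big_nil.
have [m mQ Qmax] := seq_max_exists QN0.
move: (mQ); rewrite mem_filter => /andP[/and3P[cm_neq0 m_neq0 m_neq1] mr].
have m_gt0 : 0 < m by rewrite lt_def m_neq0 r_ge0.
have Q_bnd : {in Q, forall p, 0 <= p <= m}.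
  by move=> p pQ; rewrite Qmax // r_ge0 //; move: pQ; rewrite mem_filter => /andP[].
have dom : (fun k => (expsum c r k - c1) / m ^+ k) @ \oo --> c m.
  apply: cvg_trans (expsum_div_max_cvg (filter_uniq _ ur) mQ m_gt0 Q_bnd).
  apply: near_eq_cvg; near=> k.
  rewrite tQ; first by rewrite addrC addKr.
  by near: k; exact: nbhs_infty_gt.
case/orP: (lt_total m_neq1) => [m_lt1|m_gt1].
  right; exists `|c m|, m; split => //.
  by apply: dist_limn_equiv_geometric dom; rewrite ?m_gt0.
have t_c1_bnd k : `|expsum c r k - c1| <= B + `|c1|.
  by rewrite (le_trans (ler_normB _ _)) ?lerD2r.
have cm0 : c m = 0.
  by rewrite -(cvg_lim _ dom) // (cvg_lim _ (bounded_div_expr_cvg0 m_gt1 t_c1_bnd)).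
by rewrite cm0 eqxx in cm_neq0.
Unshelve. all: end_near.
Qed.

Lemma parity_subseq_asymptotics (I : eqType) (s : seq I) (a f : I -> R)
    (W : nat -> R) (n : nat -> nat) (p : nat) (B : R) :
  (forall k, W k = \sum_(i <- s) a i * f i ^+ k) -> (forall k, `|W k| <= B) ->
  (forall k, n k = 2 * k + p)%N ->
  eventually_constant (fun k => W (n k)) \/
  exists C lam, dist_limn_equiv (fun k => W (n k)) (fun k => C * lam ^+ n k).
Proof.
move=> W_sum W_bnd nE.
set c := fun m => \sum_(i <- s | f i ^+ 2 == m) a i * f i ^+ p.
set rates := undup (map (fun i => f i ^+ 2) s).
have WnE : (fun k => W (n k)) = expsum c rates.
  apply/funext => k; rewrite nE W_sum.
  rewrite -(expsum_group s (fun i => a i * f i ^+ p) (fun i => f i ^+ 2)).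
  by apply: eq_bigr => i _; rewrite exprD exprM mulrAC mulrA.
have rates_ge0 : {in rates, forall m, 0 <= m}.
  by move=> m /[!mem_undup] /mapP [i _ ->]; exact: sqr_ge0.
have rates_bnd k : `|expsum c rates k| <= B by rewrite -WnE; exact: W_bnd.
rewrite WnE; case: (bounded_expsum_asymptotics (undup_uniq _) rates_ge0 rates_bnd).
  by left.
move=> [C [m [m_gt0 Cm]]]; right; exists (C / Num.sqrt m ^+ p), (Num.sqrt m).
have sqrt_mp_neq0 : Num.sqrt m ^+ p != 0 by rewrite expf_neq0 // gt_eqF ?sqrtr_gt0.
have -> : (fun k => C / Num.sqrt m ^+ p * Num.sqrt m ^+ n k) = (fun k => C * m ^+ k).
  apply/funext => k; rewrite nE exprD exprM sqr_sqrtr ?ltW //.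
  by rewrite [m ^+ k * _]mulrC mulrA divfK.
exact: Cm.
Qed.

End ExponentialSums.

Section LazyWalk.
Variables (R : realType) (T : finType) (e : rel T).

Definition dirac (v : T) : T -> R := fun y => (y == v)%:R.

Lemma walk_dist_lazy1 v k : walk_dist e 1 v k = dirac v.
Proof.
apply/funext; elim: k => [|k IH] y /=; first by rewrite /dirac; case: eqP.
have trans1 x : trans e 1 x y = (x == y)%:R.
  by rewrite /trans; case: eqP => // _; case: (e x y); rewrite ?subrr ?mul0r.
under eq_bigr do rewrite IH trans1.
rewrite (bigD1 v) //= big1 => [|x /negbTE]; last by rewrite /dirac => ->; rewrite mul0r.
by rewrite /dirac eqxx mul1r addr0 eq_sym.
Qed.

Lemma in_adj_set x y : (y \in [set z | e x z]) = e x y.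
Proof. by apply/idP/idP; rewrite in_setE. Qed.

Lemma trans_ge0 (g : R) x y : 0 <= g <= 1 -> 0 <= trans e g x y.
Proof.
move=> /andP[g_ge0 g_le1]; rewrite /trans; case: eqP => // _; case: (e x y) => //.
by rewrite divr_ge0 // subr_ge0.
Qed.

Lemma walk_dist_ge0 (g : R) w k y : 0 <= g <= 1 -> 0 <= walk_dist e g w k y.
Proof.
move=> g01; elim: k y => [|k IH] y /=; first by case: eqP.
by apply: sumr_ge0 => x _; rewrite mulr_ge0 // trans_ge0.
Qed.

Lemma trans_sum1 (g : R) x : ~~ e x x -> (0 < deg e x)%N ->
  \sum_y trans e g x y = 1.
Proof.
move=> exx deg_gt0; rewrite (bigD1 x) //= /trans eqxx.
have -> : \sum_(y | y != x) (if x == y then g else if e x y then (1 - g) / (deg e x)%:R else 0)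
    = \sum_(y in [set y | e x y]) (1 - g) / (deg e x)%:R.
  rewrite big_mkcond [RHS]big_mkcond; apply: eq_bigr => y _ /=.
  rewrite in_adj_set eq_sym; case: eqP => [<-|_] /=; last by case: (e x y).
  by rewrite (negbTE exx).
rewrite sumr_const -/(deg e x) -[(1 - g) / _ *+ _]mulr_natr divfK ?pnatr_eq0 -?lt0n //.
by rewrite addrC subrK.
Qed.

Lemma walk_dist_sum1 (g : R) w k : (forall x, ~~ e x x) -> (forall x, 0 < deg e x)%N ->
  \sum_y walk_dist e g w k y = 1.
Proof.
move=> irr deg_gt0; elim: k => [|k IH] /=.
  by rewrite (bigD1 w) //= eqxx big1 ?addr0 // => y /negbTE ->.
rewrite exchange_big /= -IH; apply: eq_bigr => x _.
by rewrite -mulr_sumr trans_sum1 ?mulr1.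
Qed.

End LazyWalk.

Section Transport.
Variables (R : realType) (T : finType) (e : rel T).

Definition cost_to (mu : T -> R) (v : T) : R := \sum_x mu x * (gdist e x v)%:R.

Lemma coupling_dirac_cost (mu : T -> R) v pi : coupling mu (dirac R v) pi ->
  \sum_x \sum_y pi x y * (gdist e x y)%:R = cost_to mu v.
Proof.
move=> [pi_ge0 [pi_row pi_col]].
have pi0 x y : y != v -> pi x y = 0.
  move=> yv; have := pi_col y; rewrite /dirac (negbTE yv) => /psumr_eq0P.
  by apply => // i _; exact: pi_ge0.
apply: eq_bigr => x _; rewrite -pi_row mulr_suml; apply: eq_bigr => y _.
by have [->//|yv] := eqVneq y v; rewrite pi0 ?mul0r.
Qed.

Lemma wasserstein_dirac (mu : T -> R) v :
  (forall x, 0 <= mu x) -> \sum_x mu x = 1 ->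
  wasserstein e mu (dirac R v) = cost_to mu v.
Proof.
move=> mu_ge0 mu_sum1.
have prod_coupling : coupling mu (dirac R v) (fun x y => mu x * dirac R v y).
  split; first by move=> x y; rewrite mulr_ge0 // /dirac.
  split=> [x|y]; last by rewrite -mulr_suml mu_sum1 mul1r.
  rewrite (bigD1 v) //= big1 /dirac ?eqxx ?mulr1 ?addr0 //.
  by move=> y /negbTE ->; rewrite mulr0.
rewrite /wasserstein; suff -> : [set c | exists pi, coupling mu (dirac R v) pi /\
      c = \sum_x \sum_y pi x y * (gdist e x y)%:R] = [set cost_to mu v].
  exact: inf1.
apply/seteqP; split => c /=; first by move=> [pi [/coupling_dirac_cost <- ->]].
by move=> ->; exists (fun x y => mu x * dirac R v y); split; last exact/esym/coupling_dirac_cost.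
Qed.

(* Also covers marginals without any coupling: the infimum of the empty set is 0. *)
Lemma wasserstein_gdist0 (mu nu : T -> R) :
  (forall x y, gdist e x y = 0%N) -> wasserstein e mu nu = 0.
Proof.
move=> d0; rewrite /wasserstein.
set S := [set c | _].
have : S `<=` [set 0].
  move=> c [pi [_ ->]]; rewrite /= big1 // => x _.
  by rewrite big1 // => y _; rewrite d0 mulr0.
by case/subset_set1 => ->; [exact: inf0 | exact: inf1].
Qed.

Lemma gdist_refl x : gdist e x x = 0%N.
Proof.
rewrite /gdist; have : (0 < #|T|)%N by apply/card_gt0P; exists x.
case: #|T| => // n _ /=.
suff -> : walk_n e 0 x x by [].
by apply/existsP; exists [tuple]; rewrite /= eqxx.
Qed.

Lemma gdist_le x y : (gdist e x y <= #|T|)%N.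
Proof. by rewrite /gdist (leq_trans (find_size _ _)) // size_iota. Qed.

Lemma cost_to_le (mu : T -> R) v : (forall x, 0 <= mu x) -> \sum_x mu x = 1 ->
  `|cost_to mu v| <= #|T|%:R.
Proof.
move=> mu_ge0 mu_sum1; rewrite ger0_norm; last by apply: sumr_ge0 => x _; rewrite mulr_ge0.
rewrite -[X in _ <= X]mul1r -{1}mu_sum1 mulr_suml; apply: ler_sum => x _.
by apply: ler_wpM2l => //; rewrite ler_nat gdist_le.
Qed.

Lemma isolated_vertex_singleton x : connected_graph e -> deg e x = 0%N ->
  forall y, y = x.
Proof.
move=> conn deg0 y; apply/eqP; apply: contraT => yx.
have /connectP [[|z p] /= xp yl] := conn x y; first by rewrite yl eqxx in yx.
move: xp => /andP[exz _].
suff : (0 < deg e x)%N by rewrite deg0.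
by apply/card_gt0P; exists z; rewrite in_adj_set.
Qed.

End Transport.

Lemma conj_diag_mx_pow (F : comUnitRingType) n (Q : 'M[F]_n) (d : 'rV[F]_n) k :
  Q \in unitmx ->
  (invmx Q *m diag_mx d *m Q) ^+ k = invmx Q *m diag_mx (\row_l (d 0 l ^+ k)) *m Q.
Proof.
move=> Q_unit; elim: k => [|k IH].
  rewrite expr0 (_ : \row_l _ = const_mx 1); last by apply/matrixP => i j; rewrite !mxE.
  by rewrite diag_const_mx mulmx1 mulVmx.
rewrite exprSr -mulmxE IH !mulmxA -[_ *m Q *m invmx Q]mulmxA mulmxV // mulmx1.
rewrite -[_ *m diag_mx _ *m diag_mx d]mulmxA mulmx_diag.
by congr (_ *m diag_mx _ *m _); apply/matrixP => i j; rewrite !mxE exprSr.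
Qed.

Section SymmetricPowers.
Local Open Scope complex_scope.
Variable R : realType.

Lemma Re_mul_real (z : R[i]) (x : R) : complex.Re (z * x%:C) = complex.Re z * x.
Proof. by case: z => a b /=; rewrite mulr0 subr0. Qed.

Lemma Re_sum (I : Type) (r : seq I) (F : I -> R[i]) :
  complex.Re (\sum_(i <- r) F i) = \sum_(i <- r) complex.Re (F i).
Proof. exact: (raddf_sum (@complex.Re R : Rcomplex R -> R)). Qed.

Lemma symmetric_mx_pow_expsum n (S : 'M[R]_n) (i : 'I_n) (b : 'I_n -> R) :
  S^T = S -> exists a lam : 'I_n -> R,
  forall k, \sum_j (S ^+ k) i j * b j = \sum_l a l * lam l ^+ k.
Proof.
move=> S_sym; pose Sc := map_mx (real_complex R) S.
have Sc_herm : Sc \is hermsymmx.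
  apply: realsym_hermsym.
    by apply/is_hermitianmxP; rewrite expr0 scale1r map_mx_id // /Sc map_trmx S_sym.
  by apply/mxOverP => p q; rewrite mxE complex_real.
have /orthomx_spectralP Sc_diag := hermitian_normalmx Sc_herm.
set Q := spectralmx Sc in Sc_diag; set d := spectral_diag Sc in Sc_diag.
pose lam l := complex.Re (d 0 l).
have dE l : d 0 l = (lam l)%:C.
  by rewrite /lam RRe_real //; exact: (mxOverP (hermitian_spectral_diag_real Sc_herm) 0 l).
exists (fun l => \sum_j complex.Re (invmx Q i l * Q l j) * b j), lam => k.
have ScX j : ((S ^+ k) i j)%:C = \sum_l invmx Q i l * Q l j * (lam l ^+ k)%:C.
  have -> : ((S ^+ k) i j)%:C = (Sc ^+ k) i j by rewrite /Sc -rmorphXn mxE.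
  rewrite Sc_diag conj_diag_mx_pow ?spectral_unit // mxE; apply: eq_bigr => l _.
  by rewrite mul_mx_diag !mxE dE rmorphXn mulrAC.
transitivity (complex.Re (\sum_j ((S ^+ k) i j * b j)%:C)).
  by rewrite Re_sum.
under eq_bigr do rewrite rmorphM /= ScX mulr_suml.
rewrite exchange_big Re_sum /=.
apply: eq_bigr => l _; rewrite mulr_suml Re_sum.
by apply: eq_bigr => j _; rewrite !Re_mul_real mulrAC.
Qed.

End SymmetricPowers.

Section ReversibleWalk.
Variables (R : realType) (T : finType) (e : rel T) (g : R) (u : T).
Hypotheses (e_sym : forall x y, e x y = e y x) (deg_gt0 : forall x, (0 < deg e x)%N).

Let sqdeg x : R := Num.sqrt (deg e x)%:R.

Let sqdeg_neq0 x : sqdeg x != 0.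
Proof. by rewrite gt_eqF // sqrtr_gt0 ltr0n. Qed.

Let sqdeg_sqr x : sqdeg x ^+ 2 = (deg e x)%:R.
Proof. by rewrite sqr_sqrtr ?ler0n. Qed.

Lemma trans_reversible x y :
  (deg e x)%:R * trans e g x y = (deg e y)%:R * trans e g y x.
Proof.
rewrite /trans eq_sym (e_sym y x); case: eqP => [->//|_].
case: (e x y); last by rewrite !mulr0.
by rewrite [LHS]mulrC [RHS]mulrC !divfK ?pnatr_eq0 -?lt0n.
Qed.

Definition sym_trans_mx : 'M[R]_#|T| := \matrix_(i, j)
  (sqdeg (enum_val i) * trans e g (enum_val i) (enum_val j) / sqdeg (enum_val j)).

Lemma sym_trans_mx_tr : sym_trans_mx^T = sym_trans_mx.
Proof.
apply/matrixP => i j; rewrite !mxE.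
set x := enum_val i; set y := enum_val j.
have Pyx : trans e g y x = sqdeg x ^+ 2 * trans e g x y / sqdeg y ^+ 2.
  by rewrite !sqdeg_sqr trans_reversible mulrAC divff ?mul1r // pnatr_eq0 -lt0n.
by rewrite Pyx; field; rewrite !sqdeg_neq0.
Qed.

Lemma walk_dist_sym_trans_mx k j : walk_dist e g u k (enum_val j) =
  (sym_trans_mx ^+ k) (enum_rank u) j * sqdeg (enum_val j) / sqdeg u.
Proof.
elim: k j => [|k IH] j /=.
  rewrite expr0 mxE -(inj_eq enum_val_inj) enum_rankK.
  by rewrite eq_sym; case: eqP => [->|_]; rewrite /= ?mul1r ?mul0r ?mulfV ?sqdeg_neq0.
rewrite exprSr -mulmxE mxE big_enum_val mulr_suml mulr_suml; apply: eq_bigr => i _.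
by rewrite IH mxE; field; rewrite !sqdeg_neq0.
Qed.

Lemma walk_cost_expsum v : exists a lam : 'I_#|T| -> R,
  forall k, cost_to e (walk_dist e g u k) v = \sum_l a l * lam l ^+ k.
Proof.
pose b (j : 'I_#|T|) := sqdeg (enum_val j) / sqdeg u * (gdist e (enum_val j) v)%:R.
have [a [lam S_sum]] := symmetric_mx_pow_expsum (enum_rank u) b sym_trans_mx_tr.
exists a, lam => k; rewrite -S_sum /cost_to big_enum_val; apply: eq_bigr => j _.
by rewrite walk_dist_sym_trans_mx !mulrA.
Qed.

End ReversibleWalk.

Unset Implicit Arguments. Set Strict Implicit. Set Printing Implicit Defensive.

Theorem lemma7p1 (R : realType) (T : finType) (e : rel T) (u v : T)
  (alpha beta : R)
  (hG : simple_graph e) (hconn : connected_graph e)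
  (ha0 : 0 <= alpha) (hab : alpha <= beta) (hb1 : beta <= 1)
  (hbeta : beta = 1) :
  let W := Wk e u v alpha beta in
  ((exists N : nat, forall k, (N <= k)%N -> W (2 * k)%N = W (2 * N)%N) \/
   (exists c_e lam_e : R,
      (fun k : nat => `|W (2 * k)%N - limn (fun k => W (2 * k)%N)|
                        / (c_e * lam_e ^+ (2 * k))) @ \oo --> (1 : R))) /\
  ((exists N : nat, forall k, (N <= k)%N -> W (2 * k).+1 = W (2 * N).+1) \/
   (exists c_o lam_o : R,
      (fun k : nat => `|W (2 * k).+1 - limn (fun k => W (2 * k).+1)|
                        / (c_o * lam_o ^+ (2 * k).+1)) @ \oo --> (1 : R))).
Proof.
move=> W; subst beta; have [e_sym e_irr] := hG.
have [x /eqP deg0|deg_gt0] := pickP (fun x => deg e x == 0%N).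
  have single := isolated_vertex_singleton hconn deg0.
  have W0 k : W k = 0 by apply: wasserstein_gdist0 => y z; rewrite (single y) (single z) gdist_refl.
  by split; left; exists 0%N => k _; rewrite !W0.
have {}deg_gt0 y : (0 < deg e y)%N by rewrite lt0n deg_gt0.
have mu_ge0 k y : 0 <= walk_dist e alpha u k y by apply: walk_dist_ge0; rewrite ha0.
have mu_sum1 k : \sum_y walk_dist e alpha u k y = 1 := walk_dist_sum1 alpha u k e_irr deg_gt0.
have W_cost k : W k = cost_to e (walk_dist e alpha u k) v.
  by rewrite /W /Wk walk_dist_lazy1 wasserstein_dirac.
have [a [lam W_sum]] := walk_cost_expsum alpha u e_sym deg_gt0 v.
have {}W_sum k : W k = \sum_l a l * lam l ^+ k by rewrite W_cost W_sum.
have W_bnd k : `|W k| <= #|T|%:R by rewrite W_cost cost_to_le.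
split.
- by apply: (parity_subseq_asymptotics W_sum W_bnd) => k; exact/esym/addn0.
- by apply: (parity_subseq_asymptotics W_sum W_bnd) => k; exact/esym/addn1.
Qed.
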